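(* With $F_n$ as defined in the context, $$\int_{1+\frac{(\log n)^2}{n}}^{1+(\log n)^{-1}}F_n(w)\,dw\sim\tfrac12\,n\log n\qquad(n\to\infty).$$
   Context: For $w>0$ and integer $n\ge1$ let $a_n(w)=\sum_{j=0}^n w^j$, $b_n(w)=\sum_{j=1}^n jw^j$, $c_n(w)=\sum_{j=0}^n j^2w^j$, and $$F_n(w)=\frac{1}{2\sqrt{w}}\sqrt{\frac{c_n(w)}{a_n(w)}}\sqrt{\frac{a_n(w)c_n(w)-b_n(w)^2}{w\,a_n(w)^2}}.$$ $\log$ is the natural logarithm. *)

From Stdlib Require Import Reals.
From Coquelicot Require Import Coquelicot.
Open Scope R_scope.

Definition a_n (n : nat) (w : R) : R := sum_f_R0 (fun j => w ^ j) n.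
(* b_n(w) = sum_{j=1}^n j w^j  (the j = 0 term vanishes, so sum from 0) *)
Definition b_n (n : nat) (w : R) : R := sum_f_R0 (fun j => INR j * w ^ j) n.
Definition c_n (n : nat) (w : R) : R := sum_f_R0 (fun j => (INR j) ^ 2 * w ^ j) n.

Definition F_n (n : nat) (w : R) : R :=
  / (2 * sqrt w) * sqrt (c_n n w / a_n n w)
  * sqrt ((a_n n w * c_n n w - (b_n n w) ^ 2) / (w * (a_n n w) ^ 2)).

(* Write D = w - 1, W = w^(n+1) and L = log n.  The geometric sums a_n, b_n,
   c_n have closed forms, which turn the normalized variance into
   1/D^2 - (n+1)^2 W / (w (W-1)^2) and bound the mean b_n/a_n below by
   n - 1/D.  Hence, for w > 1, F_n(w) is at most the pole n/(2D), and it is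
   at least (n - 1/D)(1 - e)/(2wD) whenever the variance defect is at most e.
   On the window 1 + L^2/n < w < 1 + 1/L we have W >= exp(nD/2) >= n^3, so the
   defect is at most 16/n and F_n is squeezed between k_n n/(2D) and n/(2D),
   with k_n -> 1 explicit.  The pole integrates to (n/2)(L - 3 log L), so the
   normalized integral lies between k_n (1 - q_n) and 1 - q_n with
   q_n = 3 log L / L -> 0, and the squeeze theorem concludes. *)

From Stdlib Require Import Reals Lra Lia Psatz.
From Coquelicot Require Import Coquelicot.
Open Scope R_scope.

Lemma a_closed n w : (w - 1) * a_n n w = w ^ S n - 1.
Proof.
  induction n as [|n IH]; unfold a_n in *; [simpl; ring|].
  rewrite tech5, Rmult_plus_distr_l, IH; simpl; ring.
Qed.

Lemma b_closed n w :
  (w - 1) ^ 2 * b_n n w = INR (S n) * w ^ S n * (w - 1) - w * (w ^ S n - 1).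
Proof.
  induction n as [|n IH]; unfold b_n in *; [simpl; ring|].
  rewrite tech5, Rmult_plus_distr_l, IH, !S_INR; simpl; ring.
Qed.

Lemma c_closed n w :
  (w - 1) ^ 3 * c_n n w =
  (w - 1) * (INR (S n) * w ^ S n * (INR n * w - INR (S n)) + INR n * w * w ^ S n + w)
  - 2 * w * (w ^ S n * (INR n * w - INR (S n)) + w).
Proof.
  induction n as [|n IH]; unfold c_n in *; [simpl; ring|].
  rewrite tech5, Rmult_plus_distr_l, IH, !S_INR; simpl; ring.
Qed.

Lemma variance_closed n w :
  (w - 1) ^ 4 * (a_n n w * c_n n w - b_n n w ^ 2) =
  w * (w ^ S n - 1) ^ 2 - INR (S n) ^ 2 * w ^ S n * (w - 1) ^ 2.
Proof.
  replace ((w - 1) ^ 4 * (a_n n w * c_n n w - b_n n w ^ 2)) with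
    ((w - 1) * a_n n w * ((w - 1) ^ 3 * c_n n w) - ((w - 1) ^ 2 * b_n n w) ^ 2) by ring.
  rewrite a_closed, b_closed, c_closed, !S_INR; ring.
Qed.

Lemma le_sqrt_of_sq y z : 0 <= y -> y ^ 2 <= z -> y <= sqrt z.
Proof. intros hy hz; rewrite <- (sqrt_pow2 y hy); now apply sqrt_le_1_alt. Qed.

Lemma sqrt_le_of_sq y z : 0 <= y -> z <= y ^ 2 -> sqrt z <= y.
Proof. intros hy hz; rewrite <- (sqrt_pow2 y hy); now apply sqrt_le_1_alt. Qed.

Lemma c_le_sq_a n w : 0 <= w -> c_n n w <= INR n ^ 2 * a_n n w.
Proof.
  intro hw; unfold c_n, a_n; rewrite scal_sum.
  apply sum_Rle; intros j hj; rewrite (Rmult_comm (w ^ j)).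
  apply Rmult_le_compat_r; [now apply pow_le|].
  apply pow_incr; split; [apply pos_INR | apply le_INR; lia].
Qed.

(* The correction in the normalized variance 1/(w-1)^2 - variance_defect n w;
   it is exponentially small once w^(n+1) is large. *)
Definition variance_defect (n : nat) (w : R) : R :=
  INR (S n) ^ 2 * w ^ S n / (w * (w ^ S n - 1) ^ 2).

Section Moments.

Variables (n : nat) (w : R).
Hypothesis hw : 1 < w.

Let D := w - 1.
Let W := w ^ S n.

Let D_pos : 0 < D.
Proof. unfold D; lra. Qed.

Let W_gt1 : 1 < W.
Proof. apply Rlt_pow_R1; [lra | lia]. Qed.

Lemma a_eq : a_n n w = (W - 1) / D.
Proof. unfold W, D; rewrite <- a_closed; field; lra. Qed.

Lemma a_pos : 0 < a_n n w.
Proof. rewrite a_eq; apply Rdiv_lt_0_compat; lra. Qed.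

Lemma variance_eq :
  (a_n n w * c_n n w - b_n n w ^ 2) / (w * a_n n w ^ 2) = 1 / D ^ 2 - variance_defect n w.
Proof.
  assert (Hv : a_n n w * c_n n w - b_n n w ^ 2 =
               (w * (W - 1) ^ 2 - INR (S n) ^ 2 * W * D ^ 2) / D ^ 4).
  { unfold W, D; rewrite <- variance_closed; field; lra. }
  rewrite Hv, a_eq; unfold variance_defect; fold W.
  field; repeat split; lra.
Qed.

(* The mean b_n/a_n = (n+1) W/(W-1) - w/D is at least n - 1/D. *)
Lemma mean_ge : INR n - 1 / D <= b_n n w / a_n n w.
Proof.
  assert (Hb : b_n n w = (INR (S n) * W * D - w * (W - 1)) / D ^ 2).
  { unfold W, D; rewrite <- b_closed; field; lra. }
  rewrite Hb, a_eq.
  replace ((INR (S n) * W * D - w * (W - 1)) / D ^ 2 / ((W - 1) / D))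
    with (INR (S n) + INR (S n) / (W - 1) - w / D) by (field; lra).
  rewrite S_INR.
  assert (0 < (INR n + 1) / (W - 1)) by (apply Rdiv_lt_0_compat; pose proof (pos_INR n); lra).
  replace (1 / D) with (w / D - 1) by (unfold D; field; lra).
  lra.
Qed.

Lemma mean_sq_le :
  0 <= 1 / D ^ 2 - variance_defect n w -> (b_n n w / a_n n w) ^ 2 <= c_n n w / a_n n w.
Proof.
  intro Hv.
  assert (Ha := a_pos).
  replace (c_n n w / a_n n w)
    with ((b_n n w / a_n n w) ^ 2 + w * (1 / D ^ 2 - variance_defect n w))
    by (rewrite <- variance_eq; field; lra).
  assert (0 <= w * (1 / D ^ 2 - variance_defect n w)) by (apply Rmult_le_pos; lra).
  lra.
Qed.

(* Upper bound by the pole: each of the three factors of F_n is bounded by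
   1/2, n and 1/D respectively. *)
Lemma F_upper : F_n n w <= INR n / (2 * D).
Proof.
  unfold F_n; rewrite variance_eq.
  assert (Ha := a_pos).
  assert (Hs : 1 <= sqrt w) by (rewrite <- sqrt_1; apply sqrt_le_1_alt; lra).
  assert (H1 : / (2 * sqrt w) <= / 2) by (apply Rinv_le_contravar; lra).
  assert (H2 : sqrt (c_n n w / a_n n w) <= INR n).
  { apply sqrt_le_of_sq; [apply pos_INR|].
    apply Rmult_le_reg_r with (a_n n w); [exact Ha|].
    unfold Rdiv; rewrite Rmult_assoc, Rinv_l, Rmult_1_r by lra.
    apply c_le_sq_a; lra. }
  assert (H3 : sqrt (1 / D ^ 2 - variance_defect n w) <= 1 / D).
  { apply sqrt_le_of_sq; [apply Rlt_le, Rdiv_lt_0_compat; lra|].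
    assert (0 <= variance_defect n w).
    { apply Rle_mult_inv_pos; [apply Rmult_le_pos; [apply pow2_ge_0 | fold W; lra]|].
      apply Rmult_lt_0_compat; [lra | apply pow_lt; fold W; lra]. }
    replace ((1 / D) ^ 2) with (1 / D ^ 2) by (field; lra); lra. }
  replace (INR n / (2 * D)) with (/ 2 * INR n * (1 / D)) by (field; lra).
  apply Rmult_le_compat; try apply Rmult_le_pos; try apply sqrt_pos; auto.
  - apply Rlt_le, Rinv_0_lt_compat, Rmult_lt_0_compat; [lra | apply sqrt_lt_R0; lra].
  - apply Rmult_le_compat; auto; [|apply sqrt_pos].
    apply Rlt_le, Rinv_0_lt_compat, Rmult_lt_0_compat; [lra | apply sqrt_lt_R0; lra].
Qed.

(* Lower bound: sqrt(c_n/a_n) dominates the mean, and a defect at most e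
   keeps the variance above (1-e)^2/D^2. *)
Lemma F_lower e :
  w <= 2 -> 0 <= e <= 1 -> variance_defect n w <= e -> 1 / D <= INR n ->
  (INR n - 1 / D) * (1 - e) / (2 * w * D) <= F_n n w.
Proof.
  intros hw2 he hdef hmean.
  unfold F_n; rewrite variance_eq.
  set (u := 1 / D ^ 2).
  assert (Hu : 1 <= u).
  { unfold u; apply Rmult_le_reg_r with (D ^ 2); [apply pow_lt; lra|].
    replace (1 / D ^ 2 * D ^ 2) with 1 by (field; lra).
    assert (D <= 1) by (unfold D; lra); nra. }
  assert (Hvar : ((1 - e) / D) ^ 2 <= u - variance_defect n w).
  { replace (((1 - e) / D) ^ 2) with ((1 - e) ^ 2 * u) by (unfold u; field; lra).
    assert (0 <= e * (u - 1)) by (apply Rmult_le_pos; lra); nra. }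
  assert (H1 : / (2 * w) <= / (2 * sqrt w)).
  { assert (sqrt w <= w) by (apply sqrt_le_of_sq; nra).
    apply Rinv_le_contravar; [|lra].
    apply Rmult_lt_0_compat; [lra | apply sqrt_lt_R0; lra]. }
  assert (H2 : INR n - 1 / D <= sqrt (c_n n w / a_n n w)).
  { apply le_sqrt_of_sq; [lra|].
    apply Rle_trans with ((b_n n w / a_n n w) ^ 2).
    - apply pow_incr; split; [lra | apply mean_ge].
    - apply mean_sq_le; fold u.
      apply Rle_trans with (((1 - e) / D) ^ 2); [apply pow2_ge_0 | exact Hvar]. }
  assert (H3 : (1 - e) / D <= sqrt (u - variance_defect n w)).
  { apply le_sqrt_of_sq; [apply Rmult_le_pos; [lra | apply Rlt_le, Rinv_0_lt_compat; lra]|].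
    exact Hvar. }
  replace ((INR n - 1 / D) * (1 - e) / (2 * w * D))
    with (/ (2 * w) * (INR n - 1 / D) * ((1 - e) / D)) by (field; lra).
  apply Rmult_le_compat; auto.
  - apply Rmult_le_pos; [apply Rlt_le, Rinv_0_lt_compat|]; lra.
  - apply Rmult_le_pos; [lra | apply Rlt_le, Rinv_0_lt_compat; lra].
  - apply Rmult_le_compat; auto; [apply Rlt_le, Rinv_0_lt_compat; lra | lra].
Qed.

End Moments.

Lemma continuous_monomial (c : R) (j : nat) x : continuous (fun w => c * w ^ j) x.
Proof.
  apply (ex_derive_continuous (K := R_AbsRing) (V := R_NormedModule)); auto_derive; auto.
Qed.

Lemma continuous_power_sum (k : nat -> R) n x :
  continuous (fun w => sum_f_R0 (fun j => k j * w ^ j) n) x.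
Proof.
  induction n as [|n IH]; [exact (continuous_monomial (k 0%nat) 0 x)|].
  apply (continuous_ext (fun w => sum_f_R0 (fun j => k j * w ^ j) n + k (S n) * w ^ S n));
    [intro; symmetry; apply tech5|].
  apply (continuous_plus (V := R_NormedModule)); [exact IH | apply continuous_monomial].
Qed.

Lemma continuous_Rmult (f g : R -> R) x :
  continuous f x -> continuous g x -> continuous (fun y => f y * g y) x.
Proof. exact (continuous_mult (K := R_AbsRing) f g x). Qed.

Lemma continuous_Rdiv (f g : R -> R) x :
  continuous f x -> continuous g x -> g x <> 0 -> continuous (fun y => f y / g y) x.
Proof. intros Hf Hg Hg0; apply continuous_Rmult; [exact Hf | now apply continuous_Rinv_comp]. Qed.

Lemma continuous_Rsqr (f : R -> R) x : continuous f x -> continuous (fun y => f y ^ 2) x.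
Proof.
  intro Hf; apply (continuous_ext (fun y => f y * f y)); [intro; simpl; ring|].
  now apply continuous_Rmult.
Qed.

Lemma F_continuous n x : 1 < x -> continuous (F_n n) x.
Proof.
  intro hx.
  assert (Ha : continuous (a_n n) x).
  { apply (continuous_ext (fun w => sum_f_R0 (fun j => 1 * w ^ j) n));
      [intro; unfold a_n; apply sum_eq; intros; ring | apply continuous_power_sum]. }
  assert (Hb : continuous (b_n n) x) by apply continuous_power_sum.
  assert (Hc : continuous (c_n n) x) by apply continuous_power_sum.
  assert (Ha0 : 0 < a_n n x) by now apply a_pos.
  assert (Hsq : 0 < sqrt x) by (apply sqrt_lt_R0; lra).
  assert (Hid : continuous (fun w : R => w) x) by apply continuous_id.
  unfold F_n; repeat apply continuous_Rmult.
  - apply continuous_Rinv_comp; [|lra].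
    apply continuous_Rmult; [apply continuous_const | apply continuous_sqrt_comp, Hid].
  - apply continuous_sqrt_comp, continuous_Rdiv; auto; lra.
  - apply continuous_sqrt_comp, continuous_Rdiv.
    + apply (continuous_minus (V := R_NormedModule));
        [now apply continuous_Rmult | now apply continuous_Rsqr].
    + apply continuous_Rmult; [exact Hid | now apply continuous_Rsqr].
    + apply Rmult_integral_contrapositive; split; [lra | apply pow_nonzero; lra].
Qed.

Lemma exp_mul_nat k y : exp (INR k * y) = exp y ^ k.
Proof.
  induction k as [|k IH]; [simpl; rewrite Rmult_0_l; apply exp_0|].
  rewrite S_INR, Rmult_plus_distr_r, exp_plus, IH, Rmult_1_l; simpl; ring.
Qed.

(* exp(D/2) <= 1 + D on [0, 1], from 1 - D/2 <= exp(-D/2). *)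
Lemma exp_half_le D : 0 <= D <= 1 -> exp (D / 2) <= 1 + D.
Proof.
  intro hD.
  assert (H := exp_ineq1_le (- (D / 2))); rewrite exp_Ropp in H.
  assert (Hu := exp_pos (D / 2)); set (u := exp (D / 2)) in *.
  assert (Hu' : u * (1 - D / 2) <= 1).
  { replace 1 with (u * / u) at 2 by (field; lra).
    apply Rmult_le_compat_l; lra. }
  nra.
Qed.

Lemma pow_ge_exp n w : 1 < w <= 2 -> exp (INR n * (w - 1) / 2) <= w ^ S n.
Proof.
  intro hw.
  replace (INR n * (w - 1) / 2) with (INR n * ((w - 1) / 2)) by field.
  rewrite exp_mul_nat.
  apply Rle_trans with (w ^ n).
  - apply pow_incr; split; [apply Rlt_le, exp_pos|].
    replace w with (1 + (w - 1)) at 2 by ring; apply exp_half_le; lra.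
  - simpl; assert (1 <= w ^ n) by (apply pow_R1_Rle; lra); nra.
Qed.

(* A crude bound exp L > L^3, via exp L >= (1 + L/4)^4. *)
Lemma cube_lt_exp L : 256 <= L -> L ^ 3 < exp L.
Proof.
  intro hL.
  replace L with (INR 4 * (L / 4)) at 2 by (simpl; field).
  rewrite exp_mul_nat.
  apply Rlt_le_trans with ((1 + L / 4) ^ 4).
  - set (y := L / 4).
    replace (L ^ 3) with (y ^ 3 * 64) by (unfold y; field).
    assert (64 <= y) by (unfold y; lra).
    simpl; nra.
  - apply pow_incr; split; [lra | apply exp_ineq1_le].
Qed.

Lemma defect_le n w :
  1 < w -> 2 <= INR n -> INR n ^ 3 <= w ^ S n -> variance_defect n w <= 16 / INR n.
Proof.
  intros hw hn hW; unfold variance_defect.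
  rewrite S_INR; set (x := INR n) in *; set (W := w ^ S n) in *.
  assert (hx3 : 8 <= x ^ 3) by (replace 8 with (2 ^ 3) by ring; apply pow_incr; lra).
  assert (hWW : 4 * W ^ 2 <= 16 * (W - 1) ^ 2) by nra.
  assert (hwW : (W - 1) ^ 2 <= w * (W - 1) ^ 2) by (assert (0 <= (W - 1) ^ 2) by apply pow2_ge_0; nra).
  assert (hN : (x + 1) ^ 2 * W * x <= 4 * x ^ 3 * W).
  { replace (4 * x ^ 3 * W) with (4 * x ^ 2 * (W * x)) by ring.
    rewrite Rmult_assoc; apply Rmult_le_compat_r; [nra | simpl; nra]. }
  assert (hxW : 4 * x ^ 3 * W <= 4 * W ^ 2) by (simpl in *; nra).
  assert (hden : 0 < w * (W - 1) ^ 2) by (apply Rmult_lt_0_compat; [lra | apply pow_lt; lra]).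
  apply Rmult_le_reg_r with (w * (W - 1) ^ 2 * x); [nra|].
  replace ((x + 1) ^ 2 * W / (w * (W - 1) ^ 2) * (w * (W - 1) ^ 2 * x))
    with ((x + 1) ^ 2 * W * x) by (field; lra).
  replace (16 / x * (w * (W - 1) ^ 2 * x)) with (16 * (w * (W - 1) ^ 2)) by (field; lra).
  lra.
Qed.

Definition pole (n : nat) (w : R) : R := INR n / (2 * (w - 1)).

Lemma pole_RInt n A B :
  1 < A -> A <= B -> is_RInt (pole n) A B (INR n / 2 * (ln (B - 1) - ln (A - 1))).
Proof.
  intros hA hAB.
  replace (INR n / 2 * (ln (B - 1) - ln (A - 1))) with
    (minus (INR n / 2 * ln (B - 1)) (INR n / 2 * ln (A - 1)))
    by (unfold minus, plus, opp; simpl; ring).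
  apply (is_RInt_derive (fun w => INR n / 2 * ln (w - 1))); intros w hw;
    rewrite Rmin_left, Rmax_right in hw by lra.
  - auto_derive; [lra | unfold pole; field; lra].
  - apply (ex_derive_continuous (K := R_AbsRing) (V := R_NormedModule)).
    unfold pole; auto_derive; lra.
Qed.

(* The two correction factors of the squeeze: the integral of the pole over
   the window is (n/2)(L - 3 log L), i.e. (1 - log_correction n) (n L/2), and
   lower_factor n is the ratio of the lower to the upper pointwise bound. *)
Definition log_correction (n : nat) : R := 3 * ln (ln (INR n)) / ln (INR n).

Definition lower_factor (n : nat) : R :=
  (1 - 1 / ln (INR n) ^ 2) * (1 - 16 / INR n) / (1 + / ln (INR n)).

Section Window.

Variable n : nat.
Let x := INR n.
Let L := ln x.
Hypothesis hL : 256 <= L.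
Let A := 1 + L ^ 2 / x.
Let B := 1 + / L.

(* L >= 256 forces n > 0, so n = exp L, and then n > L^3. *)
Let x_eq : x = exp L.
Proof.
  assert (Hx : 0 < x) by (unfold L, ln in hL; destruct (Rlt_dec 0 x); [assumption | lra]).
  unfold L; rewrite exp_ln; [reflexivity | exact Hx].
Qed.

Let L_cube : L ^ 3 < x.
Proof. rewrite x_eq; apply cube_lt_exp, hL. Qed.

Let x_pos : 0 < x.
Proof. assert (0 < L ^ 3) by (apply pow_lt; lra); lra. Qed.

Let window_ordered : 1 < A /\ A < B /\ B <= 2.
Proof.
  assert (HA : 0 < L ^ 2 / x) by (apply Rdiv_lt_0_compat; [apply pow_lt|]; lra).
  assert (HB : / L <= 1) by (rewrite <- Rinv_1; apply Rinv_le_contravar; lra).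
  unfold A, B; repeat split; try lra.
  apply Rplus_lt_compat_l, Rmult_lt_reg_r with (x * L); [nra|].
  replace (L ^ 2 / x * (x * L)) with (L ^ 3) by (field; lra).
  replace (/ L * (x * L)) with x by (field; lra); exact L_cube.
Qed.

(* Left of the window 1/(w-1) is at most n/L^2, so the mean n - 1/(w-1) is
   at least n (1 - 1/L^2). *)
Let window_inv_gap w : A < w -> 1 / (w - 1) <= x / L ^ 2.
Proof.
  intro hw.
  assert (hD : L ^ 2 / x < w - 1) by (unfold A in hw; lra).
  assert (hL2 : 0 < L ^ 2) by (apply pow_lt; lra).
  assert (0 < L ^ 2 / x) by (apply Rdiv_lt_0_compat; lra).
  apply Rmult_le_reg_r with ((w - 1) * L ^ 2); [nra|].
  replace (1 / (w - 1) * ((w - 1) * L ^ 2)) with (L ^ 2) by (field; lra).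
  replace (x / L ^ 2 * ((w - 1) * L ^ 2)) with ((w - 1) * x) by (field; lra).
  apply Rlt_le, Rmult_lt_reg_r with (/ x); [apply Rinv_0_lt_compat; lra|].
  replace ((w - 1) * x * / x) with (w - 1) by (field; lra); exact hD.
Qed.

(* On the window w^(n+1) >= exp(n (w-1)/2) >= exp(L^2/2) >= exp(3L) = n^3. *)
Let window_pow_large w : A < w < B -> x ^ 3 <= w ^ S n.
Proof.
  intro hw; destruct window_ordered as (HA & HAB & HB).
  apply Rle_trans with (exp (x * (w - 1) / 2)); [|apply pow_ge_exp; lra].
  rewrite x_eq at 1; rewrite <- exp_mul_nat.
  left; apply exp_increasing.
  assert (L ^ 2 < x * (w - 1)).
  { apply Rmult_lt_reg_r with (/ x); [apply Rinv_0_lt_compat; lra|].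
    replace (x * (w - 1) * / x) with (w - 1) by (field; lra).
    unfold A in hw; unfold Rdiv in hw; lra. }
  assert (6 * L <= L ^ 2) by (simpl; nra).
  replace (INR 3 * L) with (3 * L) by (simpl; ring); lra.
Qed.

Lemma F_lower_window w : A < w < B -> lower_factor n * pole n w <= F_n n w.
Proof.
  intro hw; destruct window_ordered as (HA & HAB & HB).
  set (e := 16 / x).
  assert (hL2 : 1 <= L ^ 2) by (simpl; nra).
  assert (hiD := window_inv_gap w ltac:(lra)).
  assert (hiL : x / L ^ 2 <= x).
  { apply Rmult_le_reg_r with (L ^ 2); [lra|].
    replace (x / L ^ 2 * L ^ 2) with x by (field; lra); nra. }
  assert (hx16 : 16 <= x) by (assert (16 <= L ^ 3) by (simpl; nra); lra).
  assert (he : 0 <= e <= 1).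
  { unfold e; split; [apply Rlt_le, Rdiv_lt_0_compat; lra|].
    apply Rmult_le_reg_r with x; [lra|]; replace (16 / x * x) with 16 by (field; lra); lra. }
  assert (hdef : variance_defect n w <= e) by (apply defect_le; [lra | fold x; lra | auto]).
  assert (hF := F_lower n w ltac:(lra) e ltac:(lra) he hdef ltac:(fold x; lra)).
  fold x in hF; eapply Rle_trans; [|exact hF].
  unfold lower_factor, pole; fold x L e.
  replace ((1 - 1 / L ^ 2) * (1 - e) / (1 + / L) * (x / (2 * (w - 1))))
    with ((x - x / L ^ 2) * ((1 - e) / (2 * B * (w - 1)))) by (unfold B; field; lra).
  replace ((x - 1 / (w - 1)) * (1 - e) / (2 * w * (w - 1)))
    with ((x - 1 / (w - 1)) * ((1 - e) / (2 * w * (w - 1)))) by (field; lra).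
  apply Rmult_le_compat; [lra | apply Rle_mult_inv_pos; nra | lra |].
  apply Rmult_le_compat_l; [lra|].
  apply Rinv_le_contravar; [nra | apply Rmult_le_compat_r; lra].
Qed.

Lemma window_ratio_bounds :
  lower_factor n * (1 - log_correction n)
  <= RInt (F_n n) (1 + ln (INR n) ^ 2 / INR n) (1 + / ln (INR n)) / (/ 2 * INR n * ln (INR n))
  <= 1 - log_correction n.
Proof.
  fold x L A B; unfold log_correction; fold x L.
  destruct window_ordered as (HA & HAB & HB).
  set (I := x / 2 * (L - 3 * ln L)).
  assert (Hpole : is_RInt (pole n) A B I).
  { replace I with (INR n / 2 * (ln (B - 1) - ln (A - 1))); [apply pole_RInt; lra|].
    unfold A, B, I; fold x.
    replace (1 + / L - 1) with (/ L) by ring.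
    replace (1 + L ^ 2 / x - 1) with (L * L / x) by (simpl; field; lra).
    rewrite ln_Rinv, ln_div, ln_mult by (try apply Rmult_lt_0_compat; lra).
    fold L; ring. }
  assert (HF : ex_RInt (F_n n) A B).
  { apply (ex_RInt_continuous (V := R_CompleteNormedModule)); intros w hw.
    rewrite Rmin_left, Rmax_right in hw by lra; apply F_continuous; lra. }
  assert (Hup : RInt (F_n n) A B <= I).
  { rewrite <- (is_RInt_unique _ _ _ _ Hpole).
    apply RInt_le; [lra | exact HF | eexists; exact Hpole |].
    intros w hw; apply F_upper; lra. }
  assert (Hlow : lower_factor n * I <= RInt (F_n n) A B).
  { assert (Hk : is_RInt (fun w => lower_factor n * pole n w) A B (lower_factor n * I))
      by exact (is_RInt_scal _ _ _ _ _ Hpole).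
    rewrite <- (is_RInt_unique _ _ _ _ Hk).
    apply RInt_le; [lra | eexists; exact Hk | exact HF |].
    intros w hw; apply F_lower_window, hw. }
  assert (HP : 0 < / 2 * x * L) by nra.
  replace (1 - 3 * ln L / L) with (I / (/ 2 * x * L)) by (unfold I; field; lra).
  split.
  - unfold Rdiv; rewrite <- Rmult_assoc.
    apply Rmult_le_compat_r; [apply Rlt_le, Rinv_0_lt_compat|]; lra.
  - apply Rmult_le_compat_r; [apply Rlt_le, Rinv_0_lt_compat|]; lra.
Qed.

End Window.

Lemma ln_INR_lim : is_lim_seq (fun n => ln (INR n)) p_infty.
Proof.
  apply (is_lim_comp_seq ln INR p_infty p_infty is_lim_ln_p); [|exact is_lim_seq_INR].
  exists 0%nat; intros; discriminate.
Qed.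

Lemma inv_ln_INR_lim : is_lim_seq (fun n => / ln (INR n)) 0.
Proof. apply (is_lim_seq_inv _ p_infty ln_INR_lim); discriminate. Qed.

Lemma log_correction_lim : is_lim_seq log_correction 0.
Proof.
  replace 0 with (3 * 0) by ring.
  apply (is_lim_seq_ext (fun n => 3 * (ln (ln (INR n)) / ln (INR n))));
    [intro; unfold log_correction, Rdiv; ring|].
  apply is_lim_seq_mult'; [apply is_lim_seq_const|].
  apply (is_lim_comp_seq (fun y => ln y / y) _ p_infty 0 is_lim_div_ln_p); [|exact ln_INR_lim].
  exists 0%nat; intros; discriminate.
Qed.

Lemma one_minus_log_correction_lim : is_lim_seq (fun n => 1 - log_correction n) 1.
Proof.
  assert (H := is_lim_seq_minus' _ _ _ _ (is_lim_seq_const 1) log_correction_lim).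
  rewrite Rminus_0_r in H; exact H.
Qed.

Lemma lower_factor_lim : is_lim_seq lower_factor 1.
Proof.
  assert (Hx : is_lim_seq (fun n => / INR n) 0)
    by (apply (is_lim_seq_inv _ p_infty is_lim_seq_INR); discriminate).
  assert (HL := inv_ln_INR_lim).
  assert (H1 := is_lim_seq_minus' _ _ _ _ (is_lim_seq_const 1) (is_lim_seq_mult' _ _ _ _ HL HL)).
  assert (H2 := is_lim_seq_minus' _ _ _ _ (is_lim_seq_const 1)
                  (is_lim_seq_mult' _ _ _ _ (is_lim_seq_const 16) Hx)).
  assert (H3 := is_lim_seq_plus' _ _ _ _ (is_lim_seq_const 1) HL).
  assert (H := is_lim_seq_div' _ _ _ _ (is_lim_seq_mult' _ _ _ _ H1 H2) H3 ltac:(lra)).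
  replace ((1 - 0 * 0) * (1 - 16 * 0) / (1 + 0)) with 1 in H by field.
  refine (is_lim_seq_ext _ _ _ _ H); intro n; unfold lower_factor.
  replace (ln (INR n) ^ 2) with (ln (INR n) * ln (INR n)) by ring.
  rewrite <- Rinv_mult; unfold Rdiv; ring.
Qed.

Theorem proposition3p2 :
  is_lim_seq
    (fun n : nat =>
       RInt (F_n n) (1 + (ln (INR n)) ^ 2 / INR n) (1 + / ln (INR n))
       / (/ 2 * INR n * ln (INR n)))
    1.
Proof.
  apply is_lim_seq_le_le_loc with
    (u := fun n => lower_factor n * (1 - log_correction n))
    (w := fun n => 1 - log_correction n).
  - assert (Hbig := proj2 (is_lim_seq_spec _ _) ln_INR_lim 256).
    apply (filter_imp _ _ (fun n hn => window_ratio_bounds n (Rlt_le _ _ hn)) Hbig).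
  - assert (H := is_lim_seq_mult' _ _ _ _ lower_factor_lim one_minus_log_correction_lim).
    rewrite Rmult_1_l in H; exact H.
  - exact one_minus_log_correction_lim.
Qed.
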